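(* Let $X$ be a complex linear space and $A\colon X\to\mathbb{C}$ a nonzero additive functional, and put $\phi(x,y)=-A(x)A(y)$ for $x,y\in X$. Then a function $f\colon X\to\mathbb{C}$ satisfies $f(x+y)=f(x)f(y)-\phi(x,y)$ for all $x,y\in X$ if and only if $f(x)=\gamma A(x)+1$ for all $x\in X$ with $\gamma\in\{i,-i\}$.
   Context: A functional $A\colon X\to\mathbb{C}$ is additive if $A(x+y)=A(x)+A(y)$ for all $x,y\in X$ (it need not be $\mathbb{C}$-linear). *)

From HB Require Import structures.
From mathcomp Require Import all_boot all_order all_algebra.
From mathcomp Require Import complex.
From mathcomp Require Import reals.
Set Implicit Arguments. Unset Strict Implicit. Unset Printing Implicit Defensive.
Import Order.TTheory GRing.Theory Num.Theory.
Local Open Scope ring_scope.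

Definition additive_fun (V : zmodType) (K : zmodType) (A : V -> K) : Prop :=
  forall x y : V, A (x + y) = A x + A y.

(* Writing f (x + y) = f x * f y + A x * A y and comparing the two ways of
   expanding f (x + x0 + z) with A x0 <> 0 gives A x * (f z - 1) =
   A z * (f x - 1), so f - 1 is a constant multiple g of A.  Substituting
   f = g A + 1 back into the equation at (x0, x0) forces g ^+ 2 = -1, i.e.
   g = i or g = -i; conversely any such g gives a solution. *)
From HB Require Import structures.
From mathcomp Require Import all_boot all_order all_algebra.
From mathcomp Require Import complex.
From mathcomp Require Import reals.
From mathcomp Require Import ring.
Set Implicit Arguments. Unset Strict Implicit. Unset Printing Implicit Defensive.
Import Order.TTheory GRing.Theory Num.Theory.
Local Open Scope ring_scope.
Local Open Scope complex_scope.

Lemma additive_fun0 (V K : zmodType) (A : V -> K) : additive_fun A -> A 0 = 0.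
Proof. by move=> hA; apply: (addrI (A 0)); rewrite -hA !addr0. Qed.

Section AdditiveQuadraticEquation.

Variables (K : fieldType) (X : zmodType) (A : X -> K) (f : X -> K).
Hypothesis hA : additive_fun A.
Hypothesis fD : forall x y, f (x + y) = f x * f y + A x * A y.
Variable x0 : X.
Hypothesis Ax0 : A x0 != 0.

Let A0 : A 0 = 0. Proof. exact: additive_fun0. Qed.

Lemma solution_at0 : f 0 = 1.
Proof.
have f00 : f 0 = f 0 * f 0 by rewrite -[in LHS](addr0 0) fD A0 mulr0 addr0.
have [f0z|f0nz] := eqVneq (f 0) 0; last by apply: (mulfI f0nz); rewrite -f00 mulr1.
have fz (x : X) : f x = 0 by rewrite -[x]addr0 fD f0z A0 !mulr0 addr0.
have := fD x0 x0; rewrite !fz mulr0 add0r => /esym/eqP.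
by rewrite mulf_eq0 orbb (negbTE Ax0).
Qed.

Lemma solution_cross (x z : X) : A x * (f z - 1) = A z * (f x - 1).
Proof.
have e := fD (x + x0) z.
rewrite (fD x x0) -addrA (fD x (x0 + z)) (addrC x0 z) (fD z x0) !hA in e.
have /eqP : A x0 * (A x * (f z - 1) - A z * (f x - 1)) = 0.
  transitivity ((f x * f x0 + A x * A x0) * f z + (A x + A x0) * A z
     - (f x * (f z * f x0 + A z * A x0) + A x * (A z + A x0))); first by ring.
  by rewrite e subrr.
by rewrite mulf_eq0 (negbTE Ax0) subr_eq0 => /eqP.
Qed.

Definition solution_slope : K := (f x0 - 1) / A x0.

Lemma solution_affine (z : X) : f z = solution_slope * A z + 1.
Proof.
apply/eqP; rewrite -subr_eq; apply/eqP; apply: (mulfI Ax0).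
by rewrite solution_cross /solution_slope; field.
Qed.

Lemma solution_slope_sqr : solution_slope ^+ 2 = -1.
Proof.
set g := solution_slope.
have e := fD x0 x0; rewrite !solution_affine hA -/g in e.
have /eqP : A x0 ^+ 2 * (g ^+ 2 + 1) = 0.
  transitivity ((g * A x0 + 1) * (g * A x0 + 1) + A x0 * A x0
                - (g * (A x0 + A x0) + 1)); first by ring.
  by rewrite -e subrr.
by rewrite mulf_eq0 expf_eq0 (negbTE Ax0) addr_eq0 => /eqP.
Qed.

End AdditiveQuadraticEquation.

Lemma affine_solution (K : comPzRingType) (X : zmodType) (A : X -> K) (g : K) :
  additive_fun A -> g ^+ 2 = -1 ->
  forall x y, g * A (x + y) + 1 = (g * A x + 1) * (g * A y + 1) + A x * A y.
Proof.
move=> hA g2 x y; rewrite hA.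
transitivity (g * A x + g * A y + 1 + (g ^+ 2 + 1) * (A x * A y)); last by ring.
by rewrite g2 addNr mul0r addr0 mulrDr.
Qed.

Lemma sqr_eqN1_complex (R : rcfType) (g : R[i]) :
  g ^+ 2 = -1 -> g = 'i \/ g = - 'i.
Proof.
by rewrite -sqr_i => /eqP; rewrite eqf_sqr => /orP[] /eqP; [left | right].
Qed.

Theorem mainTheorem9 (R : realType) (X : lmodType R[i]) (A : X -> R[i])
  (hA : additive_fun A) (hA0 : exists x : X, A x != 0) (f : X -> R[i]) :
  (forall x y : X, f (x + y) = f x * f y - (- (A x * A y))) <->
  (exists gamma : R[i], (gamma = Complex 0 1 \/ gamma = - Complex 0 1) /\
     forall x : X, f x = gamma * A x + 1).
Proof.
case: hA0 => x0 Ax0.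
split => [fD | [g [hg fE]] x y].
- have fD' x y : f (x + y) = f x * f y + A x * A y by rewrite fD opprK.
  exists (solution_slope A f x0); split.
    exact/sqr_eqN1_complex/(solution_slope_sqr hA fD' Ax0).
  move=> x; exact: (solution_affine hA fD' Ax0 x).
- have g2 : g ^+ 2 = -1 by case: hg => ->; rewrite ?sqrrN sqr_i.
  by rewrite !fE opprK affine_solution.
Qed.
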